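(* Let $\{c_n\}_{n\ge1}$ be a real sequence and $\{d_{n+1}\}_{n\ge1}$ a positive chain sequence, and let the polynomials $P_n$ be defined by $P_0(x)=1$, $P_1(x)=x-c_1$ and \[ P_{n+1}(x)=(x-c_{n+1})P_n(x)-d_{n+1}(x^2+1)P_{n-1}(x),\qquad n\ge1 . \] Put $u_0(x)=1$ and \[ u_n(x)=\frac{(-1)^n}{(x-i)^n\prod_{j=1}^n\sqrt{d_{j+1}}}\,P_n(x),\qquad n\ge1, \] and $\mathbf u_n(x)=[u_0(x),u_1(x),\dots,u_{n-1}(x)]^T$. For $n\ge2$ let $\mathbf A_n$ be the $n\times n$ tridiagonal matrix with diagonal entries $c_1,\dots,c_n$, entries $(\mathbf A_n)_{k,k+1}=i\sqrt{d_{k+1}}$ and $(\mathbf A_n)_{k+1,k}=-i\sqrt{d_{k+1}}$ for $k=1,\dots,n-1$, and let $\mathbf B_n$ be the $n\times n$ tridiagonal matrix with all diagonal entries $1$ and $(\mathbf B_n)_{k,k+1}=(\mathbf B_n)_{k+1,k}=\sqrt{d_{k+1}}$ for $k=1,\dots,n-1$. Let $\mathbf e_n$ be the $n$-th column of the $n\times n$ identity matrix. Then for every $n\ge2$, \[ \mathbf A_n\mathbf u_n(x)=x\,\mathbf B_n\mathbf u_n(x)+\sqrt{d_{n+1}}\,(x-i)\,u_n(x)\,\mathbf e_n . \] Moreover, for $n\ge2$ the zeros of $P_n$ are the eigenvalues of the generalized eigenvalue problem $\mathbf A_n\mathbf u_n(x)=x\,\mathbf B_n\mathbf u_n(x)$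.
   Context: A sequence $\{d_{n+1}\}_{n\ge1}$ is a positive chain sequence if there is a sequence $\{g_{n+1}\}_{n\ge0}$ (a parameter sequence) with $0\le g_1<1$, $0<g_n<1$ for $n\ge2$, and $d_{n+1}=(1-g_n)g_{n+1}$ for $n\ge1$. *)

From HB Require Import structures.
From mathcomp Require Import all_boot all_order all_algebra.
From mathcomp Require Import complex.
Set Implicit Arguments. Unset Strict Implicit. Unset Printing Implicit Defensive.
Import Order.TTheory GRing.Theory Num.Theory.
Local Open Scope ring_scope.

Section Defs.
Variable R : rcfType.
Local Notation C := R[i].

Definition iC : C := Complex 0 1.
Definition toC (r : R) : C := Complex r 0.

(* {d_{n+1}}_{n>=1} is a positive chain sequence (d indexed so that d (n+1) = d_{n+1};
   d 0, d 1 unused).  The parameter sequence g is indexed g k = g_k, k >= 1. *)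
Definition positive_chain_sequence (d : nat -> R) : Prop :=
  exists g : nat -> R,
    [/\ 0 <= g 1%N < 1,
        (forall n, (2 <= n)%N -> 0 < g n < 1) &
        (forall n, (1 <= n)%N -> d n.+1 = (1 - g n) * g n.+1)].

Variables (c d : nat -> R).

(* Ppair n = (P_n, P_{n+1}) *)
Fixpoint Ppair (n : nat) : {poly C} * {poly C} :=
  match n with
  | 0%N => (1, 'X - (toC (c 1%N))%:P)
  | m.+1 => let: (p, q) := Ppair m in
            (q, ('X - (toC (c m.+2))%:P) * q
                  - (toC (d m.+2))%:P * ('X ^+ 2 + 1) * p)
  end.

Definition P (n : nat) : {poly C} := (Ppair n).1.

Definition sqd (k : nat) : C := toC (Num.sqrt (d k)).

Definition u (n : nat) (x : C) : C :=
  (-1) ^+ n / ((x - iC) ^+ n * \prod_(1 <= j < n.+1) sqd j.+1) * (P n).[x].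

Definition uvec (n : nat) (x : C) : 'cV[C]_n := \col_(k < n) u k x.

(* A_n (0-based indices: entry (k, k+1) = i sqrt(d_{k+2}), i.e. 1-based (k,k+1) = i sqrt(d_{k+1})) *)
Definition Amx (n : nat) : 'M[C]_n :=
  \matrix_(k < n, l < n)
    if k == l then toC (c k.+1)
    else if l == k.+1 :> nat then iC * sqd k.+2
    else if k == l.+1 :> nat then - iC * sqd l.+2
    else 0.

Definition Bmx (n : nat) : 'M[C]_n :=
  \matrix_(k < n, l < n)
    if k == l then 1
    else if l == k.+1 :> nat then sqd k.+2
    else if k == l.+1 :> nat then sqd l.+2
    else 0.

Definition evec (n : nat) : 'cV[C]_n := \col_(k < n) if k == n.-1 :> nat then 1 else 0.

End Defs.

From HB Require Import structures.
From mathcomp Require Import all_boot all_order all_algebra.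
From mathcomp Require Import complex.
From mathcomp Require Import ring zify.
Import Order.TTheory GRing.Theory Num.Theory.
Set Implicit Arguments.
Unset Strict Implicit.
Unset Printing Implicit Defensive.
Local Open Scope ring_scope.

(* Read row by row, [A_n w = x B_n w + s e_n] is the three-term recurrence
   [(c_{k+1} - x) w_k + (i - x) sqrt(d_{k+2}) w_{k+1} = (i + x) sqrt(d_{k+1}) w_{k-1}],
   the last row having its missing term [w_n] moved to the right-hand side.
   Multiplying the recurrence of [P_n] by the normalising factor of [u_n] and
   using [(i + x)(i - x) = -(x^2 + 1)] shows that [u] solves it.  Conversely,
   for [x <> i] the recurrence determines a solution from [w_0], since its
   leading coefficient [(i - x) sqrt(d_{k+2})] is nonzero; so an eigenvector is
   [w_0 u_n(x)] padded with [w_n = 0], forcing [u_n(x) = 0], i.e. [P_n(x) = 0].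
   At [x = i] the recurrence forces [w = 0], and indeed [P_n(i) <> 0]. *)

Lemma tridiag_mul_col (T : pzRingType) n (M : 'M[T]_n) (al be ga w : nat -> T)
    (k : 'I_n) :
  (forall k l : 'I_n, M k l = if k == l then al k
      else if l == k.+1 :> nat then be k
      else if k == l.+1 :> nat then ga l else 0) ->
  (M *m \col_(l < n) w l) k 0 =
  al k * w k + (if (k.+1 < n)%N then be k * w k.+1 else 0)
  + (if (k : nat) is k'.+1 then ga k' * w k' else 0).
Proof.
move=> M_tridiag; rewrite mxE.
transitivity (\sum_(0 <= l < n) ((if l == k then al k * w l else 0)
   + (if l == k.+1 then be k * w l else 0)
   + (if l.+1 == k then ga l * w l else 0))).
  rewrite big_mkord; apply: eq_bigr => l _; rewrite M_tridiag mxE -val_eqE /=.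
  move: (nat_of_ord k) (nat_of_ord l) => a b.
  have [->|_] := eqVneq b a.
    by rewrite (ltn_eqF (ltnSn a)) (gtn_eqF (ltnSn a)) !addr0.
  rewrite add0r; have [->|_] := eqVneq b a.+1.
    by rewrite (gtn_eqF (ltnW (ltnSn a.+1))) addr0.
  by rewrite add0r [a == b.+1]eq_sym; case: (b.+1 == a); rewrite ?mul0r.
rewrite !big_split /= -!big_mkcond !big_nat1_eq /= (ltn_ord k).
congr (_ + _); case: k => [[|k] lt_k_n] /=; first by rewrite big1.
under eq_bigl do rewrite eqSS.
by rewrite big_nat1_eq /= (ltnW lt_k_n).
Qed.

Lemma positive_chain_sequence_gt0 (R : rcfType) (d : nat -> R) :
  positive_chain_sequence d -> forall k, (2 <= k)%N -> 0 < d k.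
Proof.
case=> g [/andP [_ g1_lt1] g_bounds d_g] [|[|k]] // _.
rewrite d_g // mulr_gt0 //; last by case/andP: (g_bounds k.+2 isT).
case: k => [|k]; first by rewrite subr_gt0.
by case/andP: (g_bounds k.+2 isT) => _; rewrite subr_gt0.
Qed.

Lemma iC_sub_toC_neq0 (R : rcfType) (r : R) : iC R - toC r != 0.
Proof.
apply/eqP => /(congr1 (@complex.Im R)) /=; rewrite oppr0 addr0 => /eqP.
by rewrite oner_eq0.
Qed.

Section Recurrence.
Variables (R : rcfType) (c d : nat -> R).
Hypothesis d_chain : positive_chain_sequence d.
Local Notation C := R[i].
Local Notation i := (iC R).

Lemma sqd_neq0 k : (2 <= k)%N -> sqd d k != 0.
Proof.
move=> k_ge2; apply/eqP => /(congr1 (@complex.Re R)) /= /eqP.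
by rewrite gt_eqF // sqrtr_gt0 (@positive_chain_sequence_gt0 _ d d_chain).
Qed.

Lemma sqd_sqr k : (2 <= k)%N -> sqd d k ^+ 2 = toC (d k).
Proof.
move=> k_ge2; rewrite /sqd /toC -[Complex _ 0]/((Num.sqrt (d k))%:C)%C -rmorphXn.
congr (_%:C)%C.
by rewrite sqr_sqrtr // ltW // (@positive_chain_sequence_gt0 _ d d_chain).
Qed.

Lemma P0 : P c d 0 = 1. Proof. by []. Qed.

Lemma P1 : P c d 1 = 'X - (toC (c 1%N))%:P. Proof. by []. Qed.

Lemma hornerPSS k (x : C) :
  (P c d k.+2).[x] = (x - toC (c k.+2)) * (P c d k.+1).[x]
                     - toC (d k.+2) * (x ^+ 2 + 1) * (P c d k).[x].
Proof. by rewrite /P /=; case: (Ppair c d k) => p q /=; rewrite !hornerE. Qed.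

Lemma hornerP_iC_neq0 k : (P c d k).[i] != 0.
Proof.
suff: (P c d k).[i] != 0 /\ (P c d k.+1).[i] != 0 by case.
elim: k => [|k [_ IH]]; first by rewrite P0 P1 !hornerE oner_eq0 iC_sub_toC_neq0.
split=> //; rewrite hornerPSS sqr_i addNr mulr0 mul0r subr0.
by rewrite mulf_neq0 // iC_sub_toC_neq0.
Qed.

Definition pencil_row (x : C) (w : nat -> C) k :=
  (toC (c k.+1) - x) * w k + (i - x) * sqd d k.+2 * w k.+1
  - (if k is k'.+1 then (i + x) * sqd d k'.+2 * w k' else 0).

Lemma Amx_mul_col n (x : C) (w : nat -> C) (k : 'I_n) :
  (Amx c d n *m \col_(l < n) w l) k 0 =
  x * (Bmx d n *m \col_(l < n) w l) k 0 + pencil_row x w k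
  - (if (k.+1 < n)%N then 0 else (i - x) * sqd d k.+2 * w k.+1).
Proof.
rewrite (@tridiag_mul_col _ _ _ (fun k => toC (c k.+1)) (fun k => i * sqd d k.+2)
   (fun l => - i * sqd d l.+2)); last by move=> ? ?; rewrite mxE.
rewrite (@tridiag_mul_col _ _ _ (fun _ => 1) (fun k => sqd d k.+2)
   (fun l => sqd d l.+2)); last by move=> ? ?; rewrite mxE.
by rewrite /pencil_row; case: (k.+1 < n)%N; case: (nat_of_ord k) => [|k'] /=; ring.
Qed.

Lemma Amx_mul_colP n (x : C) (w : nat -> C) :
  Amx c d n *m \col_(l < n) w l
    = x *: (Bmx d n *m \col_(l < n) w l)
      + (sqd d n.+1 * (x - i) * w n) *: evec R n
  <-> forall k, (k < n)%N -> pencil_row x w k = 0.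
Proof.
have last_row (k : 'I_n) : (k == n.-1 :> nat) = ~~ (k.+1 < n)%N.
  by have := ltn_ord k; case: n k => // n k /=; rewrite ltnS -leqNgt => ?; lia.
split=> [/matrixP eq_cols k lt_k_n | row_eq0].
  have := eq_cols (Ordinal lt_k_n) 0; rewrite (Amx_mul_col x) !mxE last_row /=.
  set Bw := \sum_(j < n) _.
  have [_|le_n_k1] /= := ltnP k.+1 n => eq_row.
    transitivity (x * Bw + pencil_row x w k - 0 - x * Bw); first ring.
    by rewrite eq_row; ring.
  have k1_eq_n : k.+1 = n by lia.
  rewrite k1_eq_n in eq_row.
  transitivity (x * Bw + pencil_row x w k - (i - x) * sqd d n.+1 * w n
    - x * Bw + (i - x) * sqd d n.+1 * w n); first ring.
  by rewrite eq_row; ring.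
apply/matrixP => k j; rewrite (ord1 j) (Amx_mul_col x) row_eq0 // !mxE addr0 last_row.
have [_|le_n_k1] /= := ltnP k.+1 n; first by rewrite mulr0 subr0 addr0.
have -> : k.+1 = n by have := ltn_ord k; lia.
ring.
Qed.

Definition ucoef (x : C) k :=
  (-1) ^+ k / ((x - i) ^+ k * \prod_(1 <= j < k.+1) sqd d j.+1).

Lemma uE x k : u c d k x = ucoef x k * (P c d k).[x].
Proof. by []. Qed.

Lemma ucoef0 x : ucoef x 0 = 1.
Proof. by rewrite /ucoef big_geq // !expr0 !mul1r invr1. Qed.

Lemma prod_sqd_neq0 k : \prod_(1 <= j < k.+1) sqd d j.+1 != 0.
Proof.
elim: k => [|k IH]; first by rewrite big_geq // oner_eq0.
by rewrite big_nat_recr //= mulf_neq0 // sqd_neq0.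
Qed.

Lemma ucoef_neq0 x k : x != i -> ucoef x k != 0.
Proof.
move=> x_neq_i.
rewrite /ucoef mulf_neq0 ?invr_eq0 ?mulf_neq0 ?expf_neq0 ?prod_sqd_neq0 //.
  by rewrite oppr_eq0 oner_eq0.
by rewrite subr_eq0.
Qed.

Lemma ucoefS x k : x != i -> ucoef x k.+1 * ((i - x) * sqd d k.+2) = ucoef x k.
Proof.
move=> x_neq_i; rewrite /ucoef big_nat_recr //= !exprS.
have xi_neq0 : x - i != 0 by rewrite subr_eq0.
have := prod_sqd_neq0 k; have := @sqd_neq0 k.+2 isT.
by move=> sqd_neq0 prod_neq0; field; rewrite prod_neq0 sqd_neq0 xi_neq0 expf_neq0.
Qed.

Lemma u0 x : u c d 0 x = 1.
Proof. by rewrite uE ucoef0 P0 -polyC1 hornerC mulr1. Qed.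

Lemma pencil_row_u x k : x != i -> pencil_row x (u c d ^~ x) k = 0.
Proof.
move=> x_neq_i; rewrite /pencil_row; case: k => [|k] /=; rewrite !uE.
  by rewrite P0 P1 -polyC1 hornerC hornerXsubC -(ucoefS 0 x_neq_i); ring.
rewrite hornerPSS -(ucoefS k x_neq_i) -(ucoefS k.+1 x_neq_i) -(@sqd_sqr k.+2 isT).
rewrite (_ : x ^+ 2 + 1 = x ^+ 2 - i ^+ 2); last by rewrite sqr_i opprK.
ring.
Qed.

Lemma pencil_row_iC_eq0 m (w : nat -> C) :
  (forall k, (k < m)%N -> pencil_row i w k = 0) -> forall k, (k < m)%N -> w k = 0.
Proof.
have toC_sub_iC_neq0 r : toC r - i != 0 by rewrite -oppr_eq0 opprB iC_sub_toC_neq0.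
move=> row_eq0; elim=> [|k IH] lt_k_m; move: (row_eq0 _ lt_k_m);
  rewrite /pencil_row /= subrr !mul0r addr0; last rewrite IH ?(ltnW lt_k_m) // mulr0.
all: by rewrite subr0 => /eqP; rewrite mulf_eq0 (negbTE (toC_sub_iC_neq0 _)) => /eqP.
Qed.

Lemma pencil_row_eq0_scale_u m (x : C) (w : nat -> C) : x != i ->
  (forall k, (k < m)%N -> pencil_row x w k = 0) ->
  forall k, (k <= m)%N -> w k = w 0%N * u c d k x.
Proof.
move=> x_neq_i row_eq0.
have next a k : (k < m)%N -> (if k is k'.+1 then w k' = a * u c d k' x else True) ->
    w k = a * u c d k x -> w k.+1 = a * u c d k.+1 x.
  move=> lt_k_m w_prev w_k.
  have : (i - x) * sqd d k.+2 * (w k.+1 - a * u c d k.+1 x) = 0.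
    transitivity (pencil_row x w k - a * pencil_row x (u c d ^~ x) k).
      by rewrite /pencil_row; case: k {lt_k_m} w_prev w_k => [|k] w_prev w_k /=;
         rewrite ?w_prev w_k; ring.
    by rewrite row_eq0 // pencil_row_u // mulr0 subr0.
  move/eqP; rewrite !mulf_eq0 subr_eq0 eq_sym (negbTE x_neq_i) /=.
  by rewrite (negbTE (@sqd_neq0 k.+2 isT)) subr_eq0 => /eqP.
have scale_u k : (k < m)%N -> w k = w 0%N * u c d k x /\ w k.+1 = w 0%N * u c d k.+1 x.
  elim: k => [|k IH] lt_k_m.
    have w_0 : w 0%N = w 0%N * u c d 0 x by rewrite u0 mulr1.
    by split=> //; apply: next.
  have [w_k w_k1] := IH (ltnW lt_k_m).
  by split=> //; apply: next.
by case=> [|k] le_k_m; [rewrite u0 mulr1 | case: (scale_u k le_k_m)].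
Qed.


Lemma Amx_mul_uvec n x : x != i ->
  Amx c d n *m uvec c d n x
    = x *: (Bmx d n *m uvec c d n x) + (sqd d n.+1 * (x - i) * u c d n x) *: evec R n.
Proof.
by move=> x_neq_i; apply/(Amx_mul_colP n x (u c d ^~ x)) => k _; exact: pencil_row_u.
Qed.

Lemma root_P_eigen n x : (0 < n)%N -> root (P c d n) x ->
  exists2 v : 'cV[C]_n, v != 0 & Amx c d n *m v = x *: (Bmx d n *m v).
Proof.
move=> n_gt0 root_Pn.
have x_neq_i : x != i by apply: contraTneq root_Pn => ->; exact: hornerP_iC_neq0.
exists (uvec c d n x).
  apply/negP => /eqP /matrixP /(_ (Ordinal n_gt0) 0).
  by rewrite !mxE u0; exact/eqP/oner_neq0.
by rewrite Amx_mul_uvec // uE (rootP root_Pn) !mulr0 scale0r addr0.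
Qed.

Lemma eigen_root_P n x (v : 'cV[C]_n) :
  v != 0 -> Amx c d n *m v = x *: (Bmx d n *m v) -> root (P c d n) x.
Proof.
move=> v_neq0 eigen_v.
pose w l := if @insub _ _ 'I_n l is Some k then v k 0 else 0.
have v_col : v = \col_(l < n) w l.
  by apply/matrixP => k j; rewrite (ord1 j) mxE /w valK.
have w_n : w n = 0 by rewrite /w insubF // ltnn.
have row_eq0 k : (k < n)%N -> pencil_row x w k = 0.
  by move: k; apply/Amx_mul_colP; rewrite -v_col w_n mulr0 scale0r addr0.
have w_neq0 : ~ (forall k, (k < n)%N -> w k = 0).
  move=> w_eq0; move/eqP: v_neq0; apply; rewrite v_col.
  by apply/matrixP => k j; rewrite !mxE w_eq0.
have [x_eq_i|x_neq_i] := eqVneq x i.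
  by exfalso; apply/w_neq0/pencil_row_iC_eq0; rewrite -x_eq_i.
have w_scale := pencil_row_eq0_scale_u x_neq_i row_eq0.
have w0_neq0 : w 0%N != 0.
  by apply/eqP => w0_eq0; apply: w_neq0 => k /ltnW /w_scale ->; rewrite w0_eq0 mul0r.
move: (w_scale n (leqnn n)); rewrite w_n uE => /esym/eqP.
by rewrite mulf_eq0 (negbTE w0_neq0) mulf_eq0 (negbTE (ucoef_neq0 _ x_neq_i)).
Qed.

End Recurrence.

Theorem theorem1p1 (R : rcfType) (c d : nat -> R) :
  positive_chain_sequence d ->
  forall n : nat, (2 <= n)%N ->
    (forall x : R[i], x != iC R ->
       Amx c d n *m uvec c d n x
       = x *: (Bmx d n *m uvec c d n x)
         + (sqd d n.+1 * (x - iC R) * u c d n x) *: evec R n)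
    /\
    (forall x : R[i],
       root (P c d n) x <->
       exists2 v : 'cV[R[i]]_n, v != 0 & Amx c d n *m v = x *: (Bmx d n *m v)).
Proof.
move=> d_chain n n_ge2; split=> [x | x]; first exact: Amx_mul_uvec.
split=> [|[v v_neq0]]; first exact: root_P_eigen (ltnW n_ge2).
exact: eigen_root_P.
Qed.
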